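(* Let $v$ be a nonzero vector of $\mathbb{F}_4^n$ and, for $1\le k\le n-1$, let $\tau_k$ be the number of self-orthogonal additive codes $C$ over $\mathbb{F}_4$ of length $n$ and dimension $k$ such that $v\in C^\perp\setminus C$. Then \[ \tau_k=2^k\prod_{i=1}^{k}\frac{2^{2(n-i)}-1}{2^i-1}; \] in particular $\tau_k$ does not depend on $v$.
   Context: $\mathbb{F}_4=\{0,1,\omega,\omega^2\}$ with $\omega^2=\omega+1$, $\bar x:=x^2$. Trace inner product $\langle u,v\rangle=\sum_{i}(u_i\bar v_i+\bar u_i v_i)\in\mathbb{F}_2$ on $\mathbb{F}_4^n$. An additive code of length $n$ is an $\mathbb{F}_2$-subspace of $\mathbb{F}_4^n$, with dimension meaning $\mathbb{F}_2$-dimension; $C^\perp$ is its dual under the trace inner product, and $C$ is self-orthogonal if $C\subseteq C^\perp$. *)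

From mathcomp Require Import all_boot all_order all_algebra.
Set Implicit Arguments. Unset Strict Implicit. Unset Printing Implicit Defensive.

(* F_4 = {0,1,w,w^2} with w^2 = w + 1.  An element (a,b) : bool * bool
   represents a + b*w  (a, b in F_2). *)
Definition F4 : finType := (bool * bool)%type.

Definition F4zero : F4 := (false, false).
Definition F4one  : F4 := (true, false).
Definition F4w    : F4 := (false, true).

Definition F4add (x y : F4) : F4 := (addb x.1 y.1, addb x.2 y.2).

(* (a + b w)(c + d w) = ac + (ad + bc) w + bd w^2 = (ac + bd) + (ad + bc + bd) w *)
Definition F4mul (x y : F4) : F4 :=
  (addb (x.1 && y.1) (x.2 && y.2),
   addb (addb (x.1 && y.2) (x.2 && y.1)) (x.2 && y.2)).

Definition F4bar (x : F4) : F4 := F4mul x x.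

Definition vec (n : nat) : finType := {ffun 'I_n -> F4}.

Definition vzero (n : nat) : vec n := [ffun _ => F4zero].
Definition vadd (n : nat) (u w : vec n) : vec n := [ffun i => F4add (u i) (w i)].

(* trace inner product <u,v> = sum_i (u_i \bar v_i + \bar u_i v_i), a value in F_2
   (computed in F_4, where it lies in the prime subfield {0,1}). *)
Definition trace_ip (n : nat) (u w : vec n) : F4 :=
  \big[F4add/F4zero]_(i < n)
     F4add (F4mul (u i) (F4bar (w i))) (F4mul (F4bar (u i)) (w i)).

(* additive code: an F_2-subspace of F_4^n, i.e. contains 0 and is closed
   under addition (over F_2 scalar multiplication is automatic). *)
Definition additive (n : nat) (C : {set vec n}) : bool :=
  (vzero n \in C) && [forall x in C, forall y in C, vadd x y \in C].

Definition F2dim_eq (n : nat) (C : {set vec n}) (k : nat) : bool :=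
  #|C| == 2 ^ k.

Definition dual (n : nat) (C : {set vec n}) : {set vec n} :=
  [set u | [forall c in C, trace_ip u c == F4zero]].

Definition self_orthogonal (n : nat) (C : {set vec n}) : bool :=
  C \subset dual C.

Definition tau (n : nat) (v : vec n) (k : nat) : nat :=
  #|[set C : {set vec n} | [&& additive C, F2dim_eq C k, self_orthogonal C,
                               v \in dual C & v \notin C]]|.

From HB Require Import structures.
From mathcomp Require Import all_boot all_order all_algebra ring zify.
Import GRing.Theory Num.Theory.
Set Implicit Arguments. Unset Strict Implicit. Unset Printing Implicit Defensive.

(* The trace form is a nondegenerate alternating F_2-bilinear form on F_4^n, an F_2-space of
   dimension 2n, so the codes counted are the k-dimensional isotropic subspaces C with
   v in C^perp minus C.  Count the sequences (c_1, ..., c_k) with c_j in W_j^perp minus W_j,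
   where W_j is spanned by v, c_1, ..., c_(j-1): as |W^perp| = 4^n / |W|, there are
   prod_(i<k) (2^(2n-i-1) - 2^(i+1)) of them.  Each one spans such a code C, and the sequences
   spanning a given C are exactly its ordered bases (v notin C keeps every W_j of size 2^j),
   of which there are prod_(i<k) (2^k - 2^i). *)

Lemma card_setID (T : finType) (A : {set T}) (P : pred T) :
  #|[set x in A | P x]| + #|[set x in A | ~~ P x]| = #|A|.
Proof.
by rewrite -(cardsID [set x | P x] A); congr (_ + _); apply: eq_card => x; rewrite !inE andbC.
Qed.

Lemma card_set_sum (T : finType) (B : {set T}) (P : pred T) :
  #|[set x in B | P x]| = \sum_(x in B) (if P x then 1 else 0).
Proof. by rewrite -sum1_card -big_mkcondr; apply: eq_bigl => x; rewrite inE. Qed.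

Lemma double_count (T U : finType) (A : {set T}) (B : {set U}) (R : T -> U -> bool) :
  \sum_(a in A) #|[set b in B | R a b]| = \sum_(b in B) #|[set a in A | R a b]|.
Proof.
under eq_bigr do rewrite card_set_sum.
by rewrite exchange_big; apply: eq_bigr => b _; rewrite card_set_sum.
Qed.

Lemma pow2_cofactor m e f : m * 2 ^ e = 2 ^ f -> m = 2 ^ (f - e).
Proof.
move=> mE; have le_ef : e <= f.
  case: m mE => [|m] mE; first by move: (expn_gt0 2 f); rewrite -mE.
  by rewrite -(leq_exp2l _ _ (isT : 1 < 2)) -mE leq_pmull.
by apply/eqP; rewrite -(eqn_pmul2r (expn_gt0 2 e)) mE -expnD subnK.
Qed.

Section AddClosed.
Variable V : finZmodType.

Definition addv_closed (A : {set V}) : bool :=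
  (0%R \in A) && [forall x in A, forall y in A, (x + y)%R \in A].

Lemma addv_closed0 A : addv_closed A -> 0%R \in A.
Proof. by case/andP. Qed.

Lemma addv_closedD A x y : addv_closed A -> x \in A -> y \in A -> (x + y)%R \in A.
Proof. by case/andP=> _ /forall_inP clA xA yA; move/forall_inP: (clA x xA); apply. Qed.

Lemma addv_closedT : addv_closed [set: V].
Proof.
by rewrite /addv_closed inE; apply/forall_inP => x _; apply/forall_inP => y _; rewrite inE.
Qed.

(* Translating by a point where [f] is [true] exchanges the zeros and the ones of [f] in [A]. *)
Lemma double_card_zeros (A : {set V}) (f : V -> bool) :
  addv_closed A -> (forall x y, f (x + y)%R = f x (+) f y) ->
  2 * #|[set x in A | ~~ f x]| = #|A| + (if [forall x in A, ~~ f x] then #|A| else 0).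
Proof.
move=> clA fD; case: forall_inP => [f0 | /forall_inP/forall_inPn [a aA /negPn fa]].
  have -> : [set x in A | ~~ f x] = A.
    by apply/setP => x; rewrite inE andb_idr //; apply: f0.
  by rewrite mul2n addnn.
have eq_card : #|[set x in A | f x]| = #|[set x in A | ~~ f x]|.
  apply/eqP; rewrite eqn_leq; apply/andP; split;
    rewrite -(card_imset _ (addrI a)); apply/subset_leq_card/subsetP => y /imsetP[x];
    rewrite !inE => /andP[xA fx] ->; rewrite addv_closedD // fD fa; by case: (f x) fx.
by rewrite addn0 -(card_setID A f) eq_card mul2n addnn.
Qed.

End AddClosed.

Section AlternatingForm.
Variable V : finZmodType.
Variable form : V -> V -> bool.
Hypothesis form_addl : forall x y z, form (x + y)%R z = form x z (+) form y z.
Hypothesis form_sym : forall x y, form x y = form y x.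
Hypothesis form_alt : forall x, form x x = false.
Hypothesis form_nondeg : forall y : V, y != 0%R -> exists x, form x y.

Lemma form_addr x y z : form x (y + z)%R = form x y (+) form x z.
Proof. by rewrite form_sym form_addl !(form_sym x). Qed.

Lemma form0l y : form 0%R y = false.
Proof. by have := form_addl 0%R 0%R y; rewrite addr0; case: (form 0%R y). Qed.

Lemma form0r x : form x 0%R = false.
Proof. by rewrite form_sym form0l. Qed.

(* A nondegenerate form with values in F_2 forces [V] to have exponent 2. *)
Lemma addvv (x : V) : (x + x = 0)%R.
Proof. by apply/eqP; apply: contraT => /form_nondeg[y]; rewrite form_addr addbb. Qed.

Lemma addvK (x : V) : cancel (+%R x) (+%R x).
Proof. by move=> y; rewrite /= addrA addvv add0r. Qed.

Definition orth (A : {set V}) : {set V} := [set u | [forall c in A, ~~ form u c]].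

Lemma orthP (A : {set V}) u : reflect (forall c, c \in A -> ~~ form u c) (u \in orth A).
Proof. by rewrite inE; apply: (iffP forall_inP). Qed.

Lemma orthS (A B : {set V}) : A \subset B -> orth B \subset orth A.
Proof. by move/subsetP=> sAB; apply/subsetP => u /orthP uB; apply/orthP => c /sAB; exact: uB. Qed.

Lemma orth_closed (A : {set V}) : addv_closed (orth A).
Proof.
apply/andP; split; first by apply/orthP => c _; rewrite form0l.
apply/forall_inP => x /orthP xA; apply/forall_inP => y /orthP yA.
by apply/orthP => c cA; rewrite form_addl (negbTE (xA c cA)) (negbTE (yA c cA)).
Qed.

(* Count the pairs [(c, u)] in [A * V] with [~~ form u c]: a nonzero [c] is orthogonal to half
   of [V], and [u] is orthogonal to all of [A] or to exactly half of it. *)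
Lemma card_orth (A : {set V}) : addv_closed A -> #|orth A| * #|A| = #|V|.
Proof.
move=> clA.
have col c : 2 * #|[set u in [set: V] | ~~ form u c]| =
             #|V| + (if c == 0%R then #|V| else 0).
  have -> : (c == 0%R) = [forall u in [set: V], ~~ form u c].
    apply/eqP/forall_inP => [-> u _|f0]; first by rewrite form0r.
    by apply: contraTeq isT => /form_nondeg[u]; move/(_ u (in_setT u)): f0 => /negbTE ->.
  by rewrite double_card_zeros ?addv_closedT ?cardsT // => x y; rewrite form_addl.
have row u : 2 * #|[set c in A | ~~ form u c]| =
             #|A| + (if u \in orth A then #|A| else 0).
  rewrite double_card_zeros //; last by move=> x y; rewrite form_addr.
  by rewrite inE.
have := congr1 (muln 2) (double_count A [set: V] (fun c u => ~~ form u c)).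
rewrite !big_distrr /= (eq_bigr _ (fun c _ => col c)) (eq_bigr _ (fun u _ => row u)).
rewrite !big_split /= !sum_nat_const cardsT.
rewrite -!big_mkcondr (big_pred1 0%R) => [|c]; last first.
  by rewrite /= andb_idl // => /eqP ->; apply: addv_closed0.
have -> : \sum_(u in [set: V] | u \in orth A) #|A| = #|orth A| * #|A|.
  by rewrite -sum_nat_const; apply: eq_bigl => u; rewrite inE.
by rewrite mulnC => /addnI.
Qed.

Fixpoint span (s : seq V) : {set V} :=
  if s is c :: s' then span s' :|: [set (c + x)%R | x in span s'] else [set 0%R].

Lemma mem_span_cons c s x : (x \in span (c :: s)) = (x \in span s) || ((c + x)%R \in span s).
Proof.
rewrite /= inE; congr orb; apply/imsetP/idP => [[y ys ->]|cxs]; first by rewrite addvK.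
by exists (c + x)%R; rewrite ?addvK.
Qed.

Lemma span_closed s : addv_closed (span s).
Proof.
elim: s => [|c s IH].
  rewrite /addv_closed inE eqxx; apply/forall_inP => x; rewrite inE => /eqP ->.
  by apply/forall_inP => y; rewrite inE => /eqP ->; rewrite addr0 inE.
rewrite /addv_closed mem_span_cons addv_closed0 //=.
apply/forall_inP => x; rewrite mem_span_cons => xs; apply/forall_inP => y.
rewrite mem_span_cons => ys; rewrite mem_span_cons addrA.
have cxy : (c + x + (c + y))%R = (x + y)%R by rewrite addrACA addvv add0r.
case/orP: xs => xs; case/orP: ys => ys; rewrite ?(addv_closedD IH xs ys) ?orbT //.
  by rewrite -addrA addrCA (addv_closedD IH xs ys) orbT.
by rewrite -cxy (addv_closedD IH xs ys).
Qed.

Lemma span_min (A : {set V}) s : addv_closed A -> {subset s <= A} -> span s \subset A.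
Proof.
move=> clA; elim: s => [|c s IH] sA /=.
  by rewrite sub1set addv_closed0.
have sA' : span s \subset A by apply: IH => y ys; apply: sA; rewrite inE ys orbT.
rewrite subUset sA' /=; apply/subsetP => _ /imsetP[x xs ->].
by apply: addv_closedD; [|apply: sA; rewrite mem_head|apply: (subsetP sA')].
Qed.

Lemma span_consS c s : span s \subset span (c :: s).
Proof. exact: subsetUl. Qed.

Lemma mem_span s x : x \in s -> x \in span s.
Proof.
elim: s => [|c s IH] //; rewrite inE => /orP[/eqP ->|/IH xs].
  by rewrite mem_span_cons addvv addv_closed0 ?orbT // span_closed.
by rewrite mem_span_cons xs.
Qed.

Lemma card_span_cons c s : c \notin span s -> #|span (c :: s)| = 2 * #|span s|.
Proof.
move=> cs; rewrite /= cardsU card_imset; last exact: addrI.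
suff -> : span s :&: [set (c + x)%R | x in span s] = set0 by rewrite cards0 subn0 addnn mul2n.
apply/setP => x; rewrite !inE; apply/negP => /andP[xs /imsetP[y ys xE]].
move: (addv_closedD (span_closed s) xs ys); rewrite xE -addrA addvv addr0.
exact: (negP cs).
Qed.

Fixpoint free (s : seq V) : bool :=
  if s is c :: s' then (c \notin span s') && free s' else true.

Lemma card_span s : free s -> #|span s| = 2 ^ size s.
Proof.
elim: s => [|c s IH] /=; first by rewrite cards1.
by case/andP=> cs fs; rewrite card_span_cons // IH // expnS.
Qed.

Lemma span_orth s : {in s &, forall x y, ~~ form x y} -> span s \subset orth (span s).
Proof.
move=> so; apply: span_min; first exact: orth_closed.
move=> x xs; apply/orthP => y ys.
have /subsetP/(_ y ys)/orthP/(_ x (set11 x)) : span s \subset orth [set x].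
  by apply: span_min (orth_closed _) _ => z zs; apply/orthP => w /set1P ->; apply: so.
by rewrite form_sym.
Qed.

Fixpoint count_bases (C : {set V}) (k : nat) (s : seq V) : nat :=
  if k is k'.+1 then \sum_(c in C | c \notin span s) count_bases C k' (c :: s) else 1.

Lemma count_basesE (C : {set V}) k s m :
  addv_closed C -> #|C| = 2 ^ (m + k) -> free s -> size s = m -> span s \subset C ->
  count_bases C k s = \prod_(i < k) (2 ^ (m + k) - 2 ^ (m + i)).
Proof.
elim: k s m => [|k IH] s m clC cardC fs sz_s sC /=; first by rewrite big_ord0.
under eq_bigr => c /andP[cC cs].
  have csC : span (c :: s) \subset C.
    by apply: span_min => // y; rewrite inE => /orP[/eqP -> //|/mem_span/(subsetP sC)].
  rewrite (IH (c :: s) m.+1) ?addSnnS //= ?cs ?sz_s //.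
  under eq_bigr do rewrite addSnnS.
  over.
rewrite sum_nat_const big_ord_recl addn0; congr (_ * _).
have := card_setID C (mem (span s)).
rewrite (_ : [set x in C | x \in span s] = span s); last first.
  by apply/setP => x; rewrite inE andb_idl // => /(subsetP sC).
by rewrite card_span // sz_s -cardC => <-; rewrite addKn; apply: eq_card => x; rewrite inE.
Qed.

Variable v : V.
Hypothesis v_neq0 : v != 0%R.

Definition codes (k : nat) : {set {set V}} :=
  [set C : {set V} | [&& addv_closed C, #|C| == 2 ^ k, C \subset orth C,
                         v \in orth C & v \notin C]].

Definition iso_ext (s : seq V) (c : V) : bool :=
  (c \in orth (span (v :: s))) && (c \notin span (v :: s)).

Fixpoint iso_chain (s : seq V) : bool :=
  if s is c :: s' then iso_ext s' c && iso_chain s' else true.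

Lemma iso_chain_free s : iso_chain s -> free (v :: s).
Proof.
elim: s => [|c s IH] /=; first by rewrite inE v_neq0.
case/andP=> /andP[_ cvs] /IH /= /andP[vs fs]; rewrite fs andbT.
apply/andP; split; last by apply: contra cvs => cs; rewrite mem_span_cons cs.
rewrite mem_span_cons negb_or vs /=; apply: contra cvs => vcs.
by rewrite mem_span_cons addrC vcs orbT.
Qed.

Lemma iso_chain_pairwise s : iso_chain s -> {in v :: s &, forall x y, ~~ form x y}.
Proof.
elim: s => [_ x y|c s IH /= /andP[/andP[cvs _] /IH so] x y].
  by rewrite !inE => /eqP -> /eqP ->; rewrite form_alt.
have c_orth z : z \in v :: s -> ~~ form c z by move/mem_span; move/orthP: cvs; apply.
have split z : z \in v :: c :: s -> z = c \/ z \in v :: s.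
  by rewrite !inE => /orP[->|/orP[/eqP ->|->]]; [right | left | right; rewrite orbT].
move=> /split[->|xs] /split[->|ys]; first by rewrite form_alt.
- exact: c_orth.
- by rewrite form_sym c_orth.
- exact: so.
Qed.

Lemma iso_chain_orth s : iso_chain s -> span (v :: s) \subset orth (span (v :: s)).
Proof. by move/iso_chain_pairwise/span_orth. Qed.

Lemma iso_chain_code s : iso_chain s -> span s \in codes (size s).
Proof.
move=> chs; have /andP[vs fs] := iso_chain_free chs.
have sub_orth := subset_trans (iso_chain_orth chs) (orthS (span_consS v s)).
rewrite inE span_closed card_span // eqxx vs andbT /=.
apply/andP; split; first exact: subset_trans (span_consS v s) sub_orth.
by apply: (subsetP sub_orth); apply: mem_span; rewrite mem_head.
Qed.

Fixpoint count_chains (k : nat) (s : seq V) : nat :=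
  if k is k'.+1 then \sum_(c | iso_ext s c) count_chains k' (c :: s) else 1.

Lemma iso_ext_in_code s C m c : C \in codes m -> span s \subset C ->
  (iso_ext s c && (span (c :: s) \subset C)) = (c \in C) && (c \notin span s).
Proof.
rewrite inE => /and5P[clC _ C_orth vC vNC] sC.
have sC' y : y \in s -> y \in C by move/mem_span/(subsetP sC).
apply/andP/andP => [[/andP[_ cvs] csC]|[cC cs]].
  split; first by apply: (subsetP csC); apply: mem_span; rewrite mem_head.
  by apply: contra cvs; apply: (subsetP (span_consS v s)).
split; last by apply: span_min => // y; rewrite inE => /orP[/eqP -> //|/sC'].
apply/andP; split.
  have /subsetP vsC : span (v :: s) \subset orth [set c].
    apply: span_min (orth_closed _) _ => y; rewrite inE => /orP[/eqP ->|/sC' yC].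
      by apply/orthP => _ /set1P ->; move/orthP: vC; apply.
    by apply/orthP => _ /set1P ->; move/subsetP/(_ y yC)/orthP: C_orth; apply.
  by apply/orthP => y /vsC/orthP/(_ c (set11 c)); rewrite form_sym.
rewrite mem_span_cons negb_or cs /=; apply: contra vNC => vcs.
by rewrite -[v](addvK c) addv_closedD // (subsetP sC) // addrC.
Qed.

Lemma count_chains_codes k s : iso_chain s ->
  count_chains k s = \sum_(C in codes (size s + k) | span s \subset C) count_bases C k s.
Proof.
elim: k s => [|k IH] s chs /=.
  rewrite addn0 (big_pred1 (span s)) // => C /=.
  apply/andP/eqP => [[codeC sC]|->]; last by rewrite iso_chain_code // subxx.
  apply/eqP; rewrite eq_sym eqEcard sC /=.
  move: codeC; rewrite inE => /and5P[_ /eqP -> _ _ _].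
  by rewrite card_span //; case/andP: (iso_chain_free chs).
under eq_bigr => c cs do rewrite IH /= ?cs ?chs // addSnnS.
rewrite (exchange_big_dep (fun C => (C \in codes (size s + k.+1)) && (span s \subset C))) /=.
  apply: eq_bigr => C /andP[codeC sC]; apply: eq_bigl => c.
  by rewrite codeC (iso_ext_in_code _ codeC sC).
by move=> c C _ /andP[-> csC]; rewrite (subset_trans (span_consS c s) csC).
Qed.

Lemma count_chainsE d k s m : #|V| = 2 ^ d -> iso_chain s -> size s = m ->
  count_chains k s = \prod_(i < k) (2 ^ (d - (m + i).+1) - 2 ^ (m + i).+1).
Proof.
move=> cardV; elim: k s m => [|k IH] s m chs sz_s /=; first by rewrite big_ord0.
under eq_bigr => c cs.
  rewrite (IH (c :: s) m.+1) /= ?cs ?chs ?sz_s //.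
  under eq_bigr do rewrite addSnnS.
  over.
rewrite sum_nat_const big_ord_recl !addn0; congr (_ * _).
set W := span (v :: s).
have cardW : #|W| = 2 ^ m.+1 by rewrite card_span ?iso_chain_free //= sz_s.
have card_orthW : #|orth W| = 2 ^ (d - m.+1).
  by apply: pow2_cofactor; rewrite -cardW -cardV card_orth ?span_closed.
rewrite -card_orthW -cardW.
have -> : #|orth W| - #|W| = #|orth W :\: W|.
  by rewrite cardsD (setIidPr (iso_chain_orth chs)).
by apply: eq_card => c; rewrite in_setD andbC.
Qed.

Lemma card_codes_mul d k : #|V| = 2 ^ d ->
  #|codes k| * \prod_(i < k) (2 ^ k - 2 ^ i) = \prod_(i < k) (2 ^ (d - i.+1) - 2 ^ i.+1).
Proof.
move=> cardV; transitivity (count_chains k [::]).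
  rewrite (count_chains_codes k (s := [::])) //= -sum_nat_const.
  apply: eq_big => [C|C codeC].
    by rewrite sub1set andb_idr // inE => /and5P[/addv_closed0].
  move: codeC; rewrite inE => /and5P[clC /eqP cardC _ _ _].
  by rewrite (@count_basesE C k [::] 0 clC cardC) // sub1set addv_closed0.
exact: (@count_chainsE d k [::] 0 cardV isT erefl).
Qed.

End AlternatingForm.

Definition trF4 (x y : F4) : bool := (F4add (F4mul x (F4bar y)) (F4mul (F4bar x) y)).1.

(* [F4vec n] has the carrier of [vec n]; its Z-module addition is [vadd]. *)
Definition F4vec (n : nat) : Type := {ffun 'I_n -> bool * bool}.
HB.instance Definition _ n := Finite.on (F4vec n).
HB.instance Definition _ n := GRing.Zmodule.on (F4vec n).

Definition trace_form n (u w : F4vec n) : bool := \big[addb/false]_(i < n) trF4 (u i) (w i).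

Lemma trace_ipE n (u w : vec n) : trace_ip u w = (trace_form u w, false).
Proof.
rewrite /trace_ip /trace_form; set S := \big[F4add/F4zero]_(i < n) _.
have S1 : S.1 = \big[addb/false]_(i < n) trF4 (u i) (w i).
  by rewrite /S (big_morph (fun x : F4 => x.1) (id1 := false) (op1 := addb)).
have S2 : S.2 = false.
  rewrite /S (big_morph (fun x : F4 => x.2) (id1 := false) (op1 := addb)) //.
  by rewrite big1 // => i _; case: (u i) => [[] []]; case: (w i) => [[] []].
by case: S S1 S2 => a b /= -> ->.
Qed.

Section TraceForm.
Variable n : nat.

Lemma trace_form_addl (x y z : F4vec n) :
  trace_form (x + y)%R z = trace_form x z (+) trace_form y z.
Proof.
rewrite /trace_form -big_split /=; apply: eq_bigr => i _; rewrite ffunE.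
by case: (x i) => [[] []]; case: (y i) => [[] []]; case: (z i) => [[] []].
Qed.

Lemma trace_formC (x y : F4vec n) : trace_form x y = trace_form y x.
Proof. by apply: eq_bigr => i _; case: (x i) => [[] []]; case: (y i) => [[] []]. Qed.

Lemma trace_form_alt (x : F4vec n) : trace_form x x = false.
Proof. by rewrite /trace_form big1 // => i _; case: (x i) => [[] []]. Qed.

Lemma trace_form_nondeg (y : F4vec n) : y != 0%R -> exists x, trace_form x y.
Proof.
move=> y_neq0; have [i yi] : exists i, y i != 0%R.
  apply/existsP; apply: contraR y_neq0 => /existsPn y0.
  by apply/eqP/ffunP => i; apply/eqP; move: (y0 i); rewrite ffunE negbK.
have [e tr_e] : exists e, trF4 e (y i).
  by move: yi; case: (y i) => [[] []] // _;
    [exists (false, true) | exists (false, true) | exists (true, false)].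
exists [ffun j => if j == i then e else 0%R].
rewrite /trace_form (bigD1 i) //= big1 ?ffunE ?eqxx ?addbF // => j /negbTE ji.
by rewrite ffunE ji; case: (y j) => [[] []].
Qed.

Lemma card_F4vec : #|{: F4vec n}| = 2 ^ (2 * n).
Proof. by rewrite card_ffun card_prod card_bool card_ord expnM. Qed.

End TraceForm.

Lemma dualE n (C : {set vec n}) : dual C = orth (@trace_form n) C.
Proof.
by apply/setP => u; rewrite !inE; apply: eq_forallb => c; rewrite trace_ipE; case: trace_form.
Qed.

Lemma tauE n (v : vec n) k : tau v k = #|codes (@trace_form n) v k|.
Proof. by apply: eq_card => C; rewrite [in LHS]in_set [in RHS]in_set /self_orthogonal dualE. Qed.

Local Open Scope ring_scope.

Lemma natr_pow2B (a b : nat) : (a <= b)%N ->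
  ((2 ^ b - 2 ^ a)%N%:R : rat) = 2 ^+ a * (2 ^+ (b - a) - 1).
Proof. by move=> ab; rewrite natrB ?leq_exp2l // !natrX mulrBr mulr1 -exprD subnKC. Qed.

Lemma pow2S_sub1_neq0 (i : nat) : (2 ^+ i.+1 - 1 : rat) != 0.
Proof.
have -> : (2 ^+ i.+1 - 1 : rat) = (2 ^ i.+1 - 1)%N%:R by rewrite natrB ?expn_gt0 // natrX.
by rewrite pnatr_eq0 subn_eq0 -ltnNge -{1}(expn0 2) ltn_exp2l.
Qed.

Lemma natr_prod_pow2B_l (k : nat) :
  ((\prod_(i < k) (2 ^ k - 2 ^ i))%N%:R : rat) =
    \prod_(i < k) 2 ^+ i * \prod_(i < k) (2 ^+ i.+1 - 1).
Proof.
rewrite natr_prod.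
rewrite (eq_bigr (fun i : 'I_k => 2 ^+ i * (2 ^+ (k - i) - 1))); last first.
  by move=> i _; rewrite natr_pow2B // ltnW.
rewrite big_split /= [X in _ * X = _](reindex_inj rev_ord_inj) /=.
by congr (_ * _); apply: eq_bigr => i _; rewrite subKn.
Qed.

Lemma natr_prod_pow2B_r (n k : nat) : (k <= n)%N ->
  ((\prod_(i < k) (2 ^ (2 * n - i.+1) - 2 ^ i.+1))%N%:R : rat) =
    2 ^+ k * \prod_(i < k) 2 ^+ i * \prod_(i < k) (2 ^+ (2 * (n - i.+1)) - 1).
Proof.
move=> kn; rewrite natr_prod.
rewrite (eq_bigr (fun i : 'I_k => 2 ^+ i.+1 * (2 ^+ (2 * (n - i.+1)) - 1))); last first.
  move=> i _; have ltik := ltn_ord i.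
  by rewrite natr_pow2B; [congr (_ * (_ ^+ _ - _)) | ]; lia.
rewrite big_split /=; congr (_ * _).
by under eq_bigr do rewrite exprS; rewrite big_split prodr_const card_ord.
Qed.

Lemma ratr_of_count_identity (t n k : nat) : (k <= n)%N ->
  (t * \prod_(i < k) (2 ^ k - 2 ^ i) = \prod_(i < k) (2 ^ (2 * n - i.+1) - 2 ^ i.+1))%N ->
  (t%:R : rat) = 2 ^+ k * \prod_(1 <= i < k.+1) ((2 ^+ (2 * (n - i)) - 1) / (2 ^+ i - 1)).
Proof.
move=> kn /(congr1 (fun m => m%:R : rat)).
rewrite natrM natr_prod_pow2B_l natr_prod_pow2B_r // big_add1 big_mkord prodf_div /=.
set P := \prod_(i < k) (2 ^+ i : rat); set Q := \prod_(i < k) (2 ^+ i.+1 - 1 : rat).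
have P_neq0 : P != 0 by rewrite prodf_seq_neq0; apply/allP => i _; rewrite expf_neq0.
have Q_neq0 : Q != 0 by rewrite prodf_seq_neq0; apply/allP => i _; rewrite pow2S_sub1_neq0.
move=> E; apply: (mulIf (mulf_neq0 P_neq0 Q_neq0)); rewrite E.
by field.
Qed.

Theorem lemmaA3 (n : nat) (v : vec n) (k : nat) :
  v != vzero n -> (1 <= k)%N -> (k <= n.-1)%N ->
  ((tau v k)%:R : rat) =
    2 ^+ k * \prod_(1 <= i < k.+1) ((2 ^+ (2 * (n - i)) - 1) / (2 ^+ i - 1)).
Proof.
move=> v_neq0 _ kn; apply: ratr_of_count_identity; first exact: leq_trans kn (leq_pred n).
rewrite tauE; exact: (card_codes_mul (@trace_form_addl n) (@trace_formC n)
  (@trace_form_alt n) (@trace_form_nondeg n) v_neq0 k (card_F4vec n)).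
Qed.
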